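(* Every divergent $T$-orbit of a positive integer and every nontrivial $T$-cycle of positive integers contains an integer congruent to $20\pmod{27}$; i.e. $\{20\bmod 27\}$ is forward sufficient and cycle sufficient.
   Context: $T(x)=x/2$ for $x$ even and $T(x)=(3x+1)/2$ for $x$ odd. A divergent orbit is an unbounded $T$-orbit of a positive integer; a nontrivial cycle is a periodic $T$-orbit of positive integers other than $\{1,2\}$. *)

From mathcomp Require Import all_boot.
Set Implicit Arguments. Unset Strict Implicit. Unset Printing Implicit Defensive.

Definition T (x : nat) : nat := if odd x then (3 * x + 1)./2 else x./2.

Definition divergent (n : nat) : Prop :=
  0 < n /\ forall B : nat, exists k : nat, B < iter k T n.

Definition on_nontrivial_cycle (n : nat) : Prop :=
  0 < n /\ (exists p : nat, 0 < p /\ iter p T n = n)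
        /\ (exists k : nat, iter k T n \notin [:: 1; 2]).

(* Suppose the orbit of n never meets 20 (mod 27).  Since both T-successors of
   a number that is 13 mod 27 are 20 mod 27, the orbit also avoids 13; and a
   number that is 26 mod 27 has its successor 26 (if odd) or 13 (if even) mod
   27, so reaching 26 would force the orbit to stay odd forever, which no orbit
   does (2^i (T^i y + 1) = 3^i (y + 1) would give 2^(y+1) | y + 1).  Hence the
   orbit stays in the residues outside {13, 20, 26}.  On those residues the
   weighted size V x = wt (x mod 27) * x, with a weight table wt in [16, 49]
   checked by computation, contracts: 8 V (T x) <= 7 V x + 392.  So V is
   bounded along the orbit (no divergence), and on a cycle V n <= 392, which
   forces n <= 24; but every such n falls into the trivial cycle {1, 2}. *)

From mathcomp Require Import all_boot.
From mathcomp Require Import zify.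
From Stdlib Require Classical_Prop.

(* T on residues mod 27: 1/2 is 14 mod 27, so T acts as a -> 14(3a+1) on odd
   numbers and a -> 14a on even numbers. *)
Definition Ostep (a : nat) : nat := (14 * (3 * a + 1)) %% 27.
Definition Estep (a : nat) : nat := (14 * a) %% 27.

Lemma T_mod x : T x %% 27 = if odd x then Ostep (x %% 27) else Estep (x %% 27).
Proof.
rewrite /T /Ostep /Estep; have := odd_double_half x.
by case: (odd x) => /= Hx; lia.
Qed.

Lemma T_odd x : odd x -> 2 * T x = 3 * x + 1.
Proof.
move=> Ho; rewrite /T Ho; have := odd_double_half x.
by rewrite Ho /= => H; lia.
Qed.

Lemma T_even x : ~~ odd x -> 2 * T x = x.
Proof.
move=> /negbTE Ho; rewrite /T Ho; have := odd_double_half x.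
by rewrite Ho /= => H; lia.
Qed.

(* No T-orbit consists of odd numbers only: otherwise
   2^i (T^i y + 1) = 3^i (y + 1) for all i, so 2^(y+1) would divide y + 1. *)
Lemma not_always_odd y : ~ (forall i, odd (iter i T y)).
Proof.
move=> Hodd.
have growth i : 2 ^ i * (iter i T y + 1) = 3 ^ i * (y + 1).
  elim: i => [|i IH]; first by rewrite !expn0 !mul1n.
  have E := T_odd _ (Hodd i).
  rewrite iterS !expnS -mulnA -(mulnA 3) -IH; nia.
have Hdvd : 2 ^ (y + 1) %| y + 1.
  have Hcop : coprime (2 ^ (y + 1)) (3 ^ (y + 1)) by rewrite coprimeXl // coprimeXr.
  by rewrite -(Gauss_dvdr _ Hcop) -growth dvdn_mulr.
rewrite addn1 in Hdvd; have := dvdn_leq (ltn0Sn y) Hdvd.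
by rewrite leqNgt ltn_expl.
Qed.

(* The residues that an orbit avoiding 20 mod 27 can be shown never to visit. *)
Definition bad (a : nat) : bool := (a == 13) || (a == 20) || (a == 26).

Definition wt (a : nat) : nat :=
  nth 49 [:: 49; 49; 28; 49; 16; 28; 49; 49; 16; 49; 49; 28; 49; 49; 28; 49;
             49; 16; 49; 49; 49; 49; 16; 28; 49; 49; 49] a.

Definition V (x : nat) : nat := wt (x %% 27) * x.

Lemma wt_bounds a : 16 <= wt a <= 49.
Proof.
have [lt27|ge27] := ltnP a 27; last by rewrite /wt nth_default.
by move: a lt27; do 27 case=> //.
Qed.

(* The weight inequalities behind the contraction, checked on all residues:
   an odd step multiplies x by about 3/2, an even step by 1/2. *)
Lemma wt_table :
  all (fun a => (~~ bad a ==> ~~ bad (Ostep a) ==> (12 * wt (Ostep a) <= 7 * wt a))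
             && (~~ bad a ==> ~~ bad (Estep a) ==> (4 * wt (Estep a) <= 7 * wt a)))
      (iota 0 27).
Proof. by vm_compute. Qed.

Lemma V_contracts x :
  ~~ bad (x %% 27) -> ~~ bad (T x %% 27) -> 8 * V (T x) <= 7 * V x + 392.
Proof.
move=> Hx HTx.
have Hres : x %% 27 \in iota 0 27 by rewrite mem_iota add0n ltn_mod.
have /andP [Hodd Heven] := allP wt_table _ Hres; rewrite Hx /= in Hodd Heven.
have := wt_bounds (x %% 27); have := wt_bounds (T x %% 27).
rewrite /V; move: HTx; rewrite T_mod.
case Ho: (odd x) => HTx Wt Wx.
- rewrite HTx /= in Hodd; have := T_odd _ Ho; nia.
- rewrite HTx /= in Heven; have := T_even _ (negbT Ho); nia.
Qed.

Lemma contracting_bounded (u : nat -> nat) (c : nat) :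
  (forall k, 8 * u k.+1 <= 7 * u k + c) -> forall k, u k <= maxn (u 0) c.
Proof.
move=> Hu; elim=> [|k IH]; first exact: leq_maxl.
have := Hu k; have := leq_maxr (u 0) c; lia.
Qed.

Section AvoidingOrbit.

Variable n : nat.
Hypothesis avoid20 : forall k, iter k T n %% 27 != 20.

(* Both successors of 13 mod 27 are 20 mod 27. *)
Lemma avoid13 k : iter k T n %% 27 != 13.
Proof.
apply/eqP => H13; have := avoid20 k.+1.
by rewrite iterS T_mod H13; case: odd.
Qed.

(* From 26 mod 27 the orbit would stay odd and 26 mod 27 forever. *)
Lemma avoid26 k : iter k T n %% 27 != 26.
Proof.
apply/eqP => H26.
have stuck i : iter (i + k) T n %% 27 = 26 /\ odd (iter (i + k) T n).
  elim: i => [|i [IH26 IHodd]].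
    split=> //; case Ho: (odd _) => //.
    by have := avoid13 k.+1; rewrite iterS T_mod Ho H26.
  have E26 : iter (i.+1 + k) T n %% 27 = 26 by rewrite addSn iterS T_mod IHodd IH26.
  split=> //; case Ho: (odd _) => //.
  by have := avoid13 (i.+1 + k).+1; rewrite iterS T_mod Ho E26.
by apply: (not_always_odd (iter k T n)) => i; rewrite -iterD; case: (stuck i).
Qed.

Lemma avoid_bad k : ~~ bad (iter k T n %% 27).
Proof. by rewrite /bad (negbTE (avoid13 k)) (negbTE (avoid20 k)) (negbTE (avoid26 k)). Qed.

Lemma V_orbit_contracts k : 8 * V (iter k.+1 T n) <= 7 * V (iter k T n) + 392.
Proof. by rewrite iterS; apply: V_contracts; rewrite -?iterS; apply: avoid_bad. Qed.

Lemma V_orbit_bounded j k : V (iter (k + j) T n) <= maxn (V (iter j T n)) 392.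
Proof.
apply: (contracting_bounded (fun k => V (iter (k + j) T n))) => i.
by rewrite addSn; apply: V_orbit_contracts.
Qed.

(* Hence the orbit is bounded, since 16 x <= V x. *)
Lemma avoid_not_divergent : ~ divergent n.
Proof.
case=> _ /(_ (maxn (V n) 392)) [k Hk].
have := V_orbit_bounded 0 k; rewrite addn0 /=; move: Hk.
have := wt_bounds (iter k T n %% 27); set M := maxn _ _; rewrite /V; nia.
Qed.

(* If n is periodic, V n <= max (V (T n)) 392 with 8 V (T n) <= 7 V n + 392,
   so V n <= 392, i.e. n <= 24. *)
Lemma avoid_periodic_small p : 0 < p -> iter p T n = n -> n <= 24.
Proof.
move=> Hp Hper.
have Hstep := V_orbit_contracts 0.
have := V_orbit_bounded 1 p.-1; rewrite addn1 prednK // Hper => Hback.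
have HV : V n <= 392.
  by move: Hstep Hback => /=; set b := V n; set a := V (T n); lia.
by move: HV; have := wt_bounds (n %% 27); rewrite /V; nia.
Qed.

End AvoidingOrbit.

Lemma iter_trivial_cycle m : iter m T 1 \in [:: 1; 2].
Proof. by elim: m => [|m] //; rewrite iterS !inE => /orP [] /eqP ->. Qed.

Lemma small_reach_one :
  all (fun n => has (fun s => iter s T n == 1) (iota 0 120)) (iota 1 24).
Proof. by vm_compute. Qed.

Lemma iter_period (A : Type) (f : A -> A) x p j :
  iter p f x = x -> iter (p * j) f x = x.
Proof.
move=> Hper; elim: j => [|j IH]; first by rewrite muln0.
by rewrite mulnS iterD IH Hper.
Qed.

Lemma small_cycle_trivial n p k :
  0 < n -> n <= 24 -> 0 < p -> iter p T n = n -> iter k T n \in [:: 1; 2].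
Proof.
move=> Hn0 Hn24 Hp Hper.
have Hrange : n \in iota 1 24 by rewrite mem_iota; lia.
have /hasP [s _ /eqP Hs] := allP small_reach_one _ Hrange.
have -> : n = iter (p * s - s) T 1.
  by rewrite -Hs -iterD subnK ?iter_period // leq_pmull.
by rewrite -iterD iter_trivial_cycle.
Qed.

Theorem mainTheorem15 :
  (forall n : nat, divergent n -> exists k : nat, iter k T n %% 27 = 20) /\
  (forall n : nat, on_nontrivial_cycle n -> exists k : nat, iter k T n %% 27 = 20).
Proof.
have by_contra (n : nat) (P : Prop) :
    ((forall k, iter k T n %% 27 != 20) -> ~ P) ->
    P -> exists k, iter k T n %% 27 = 20.
  move=> Hno HP; apply: Classical_Prop.NNPP => Hnot; apply: (Hno _ HP) => k.
  by apply/eqP => H20; apply: Hnot; exists k.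
split=> n; apply: by_contra => avoid.
- exact: avoid_not_divergent.
- case=> Hn [[p [Hp Hper]] [k Hk]].
  have Hn24 := avoid_periodic_small n avoid p Hp Hper.
  by rewrite (small_cycle_trivial n p k Hn Hn24 Hp Hper) in Hk.
Qed.
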